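(* Let $n_0,n_1\ge 0$ and $m$ be integers with $0<m\le n_0+n_1$, and let $X\sim\mathrm{Hyper}(n_0,n_1;m)$, i.e. $$\mathbb P(X=k)=\frac{\binom{n_0}{k}\binom{n_1}{m-k}}{\binom{n_0+n_1}{m}}.$$ Set $Y=X/(1+m-X)$. Then $$\mathbb E Y=\frac{n_0}{1+n_1}\left(1-\frac{\binom{n_0-1}{m}}{\binom{n_0+n_1}{m}}\right).$$ In particular, $\mathbb E Y\le \frac{n_0}{1+n_1}$ for every such $m$.
   Context: Binomial coefficient conventions: $\binom{0}{0}=1$, and $\binom{n}{k}=0$ if $n<0$, or if $k<0$, or if $k>n$. *)

From HB Require Import structures.
From mathcomp Require Import all_boot all_order all_algebra.
Set Implicit Arguments. Unset Strict Implicit. Unset Printing Implicit Defensive.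
Import Order.TTheory GRing.Theory Num.Theory.
Local Open Scope ring_scope.

(* P(X = k) for X ~ Hyper(n0, n1; m), for 0 <= k <= m (outside this range the
   probability is 0 by the binomial conventions). *)
Definition hyper_pmf (n0 n1 m k : nat) : rat :=
  ('C(n0, k) * 'C(n1, m - k))%:R / ('C(n0 + n1, m))%:R.

(* E Y with Y = X / (1 + m - X); the support of X is contained in {0,...,m}. *)
Definition hyper_EY (n0 n1 m : nat) : rat :=
  \sum_(k < m.+1) hyper_pmf n0 n1 m k * ((k : nat)%:R / (1 + m - k)%N%:R).

From HB Require Import structures.
From mathcomp Require Import all_boot all_order all_algebra.
From mathcomp Require Import ring zify.
Import Order.TTheory GRing.Theory Num.Theory.
Local Open Scope ring_scope.

(* Absorption on both binomials turns the weight k / (1 + m - k) into the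
   constant n0 / (1 + n1), leaving the terms C(n0 - 1, k - 1) C(n1 + 1, m - k + 1)
   of a Vandermonde sum for C(n0 + n1, m) from which only the top term
   C(n0 - 1, m) is missing. *)

Lemma bin_ratio_shift (R : numFieldType) (n0 n1 m i : nat) : (i < m)%N ->
  ('C(n0, i.+1) * 'C(n1, m - i.+1))%:R * (i.+1%:R / (m - i)%:R)
  = n0%:R / n1.+1%:R * ('C(n0.-1, i) * 'C(n1.+1, m - i))%:R :> R.
Proof.
move=> lt_im.
have absorb0 : i.+1%:R * 'C(n0, i.+1)%:R = n0%:R * 'C(n0.-1, i)%:R :> R.
  by rewrite -!natrM mul_bin_diag.
have absorb1 : n1.+1%:R * 'C(n1, m - i.+1)%:R
               = (m - i)%:R * 'C(n1.+1, m - i)%:R :> R.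
  have -> : (m - i = (m - i.+1).+1)%N by lia.
  by rewrite -!natrM mul_bin_diag.
have mi_neq0 : (m - i)%:R != 0 :> R by rewrite pnatr_eq0; lia.
have n1_neq0 : n1.+1%:R != 0 :> R by rewrite pnatr_eq0.
have i1_neq0 : i.+1%:R != 0 :> R by rewrite pnatr_eq0.
rewrite !natrM -(mulKf n1_neq0 'C(n1, _)%:R) absorb1.
rewrite -(mulKf i1_neq0 'C(n0, _)%:R) absorb0.
by field; rewrite mi_neq0 !(addrC 1) !natr1 n1_neq0 i1_neq0.
Qed.

Lemma Vandermonde_sum_ltn (a b m : nat) :
  (\sum_(i < m) 'C(a, i) * 'C(b, m - i) + 'C(a, m))%N = 'C(a + b, m).
Proof. by rewrite -binomial.Vandermonde big_ord_recr /= subnn bin0 muln1. Qed.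

Lemma hyper_EY_sum (n0 n1 m : nat) :
  hyper_EY n0 n1 m = n0%:R / (1 + n1)%N%:R *
    ((\sum_(i < m) 'C(n0.-1, i) * 'C(n1.+1, m - i))%N%:R / 'C(n0 + n1, m)%:R).
Proof.
rewrite /hyper_EY big_ord_recl /= mul0r mulr0 add0r natr_sum mulr_suml mulr_sumr.
apply: eq_bigr => i _; rewrite /hyper_pmf /bump /= add1n subSS.
by rewrite mulrAC bin_ratio_shift // mulrA.
Qed.

Lemma hyper_EY_closed_form (n0 n1 m : nat) : (m <= n0 + n1)%N ->
  hyper_EY n0 n1 m =
    n0%:R / (1 + n1)%N%:R * (1 - 'C(n0.-1, m)%:R / 'C(n0 + n1, m)%:R).
Proof.
rewrite hyper_EY_sum; case: n0 => [_|n0 hm]; first by rewrite !mul0r.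
have C_neq0 : 'C(n0.+1 + n1, m)%:R != 0 :> rat by rewrite pnatr_eq0 -lt0n bin_gt0.
rewrite addSnnS -(Vandermonde_sum_ltn n0 n1.+1) natrD in C_neq0 *.
by congr (_ * _); field.
Qed.

Theorem lemma2 (n0 n1 m : nat) (hm0 : (0 < m)%N) (hm : (m <= n0 + n1)%N) :
  hyper_EY n0 n1 m =
    (n0%:R / (1 + n1)%N%:R) *
    (1 - ('C(n0.-1, m))%:R / ('C(n0 + n1, m))%:R)
  /\ hyper_EY n0 n1 m <= n0%:R / (1 + n1)%N%:R.
Proof.
rewrite hyper_EY_closed_form //; split=> //.
rewrite ler_piMr ?divr_ge0 //.
by rewrite lerBlDr lerDl divr_ge0.
Qed.
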